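(* Let $s\ge 4$ be a perfect square and $E=\mathbb{R}^{s\times s\times s}$. Let $C_1,\dots,C_5\subset E$ be the Sudoku constraint sets defined in the context, and assume $C_1\cap\dots\cap C_5\neq\emptyset$. Let $z_{1,0},\dots,z_{5,0}\in E$ and consider the product-space Douglas--Rachford iteration \[ x_{k+1}=\tfrac15\sum_{i=1}^5 z_{i,k},\qquad u_{i,k+1}\in P_{C_i}(2x_{k+1}-z_{i,k}),\qquad z_{i,k+1}=z_{i,k}+u_{i,k+1}-x_{k+1}\quad(i=1,\dots,5). \] Write $\mathbf{z}_k=(z_{1,k},\dots,z_{5,k})$, $\mathbf{u}_k=(u_{1,k},\dots,u_{5,k})$. Assume the iteration converges: $\mathbf{z}_k\to\mathbf{z}^\star=(z_1^\star,\dots,z_5^\star)$, $x_k\to x^\star$ and $u_{i,k}\to x^\star$ for each $i$, where $x^\star=\tfrac15\sum_{i=1}^5 z_i^\star$. Suppose moreover that for $i=1,\dots,4$, $C_i$ is prox-regular at $x^\star$ for $x^\star-z_i^\star$ and \[ x^\star-z_i^\star\in\operatorname{int}\big(N_{C_i}(x^\star)\big). \] Then for all $k$ large enough $u_{i,k}=x^\star$ for $i=1,\dots,4$, and $\|\mathbf{z}_k-\mathbf{z}^\star\|=O(\eta^k)$ with $\eta=\frac{\sqrt5}{5}$ (norm on $E^5$ is the Euclidean product norm).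
   Context: Entries of $x\in E$ are $x(i,j,k)$, $i,j,k\in\{1,\dots,s\}$. Let $\mathcal{E}=\{e_1,\dots,e_s\}$ be the standard basis vectors of $\mathbb{R}^s$. $C_1=\{x: x(\cdot,j,k)\in\mathcal{E}\ \forall j,k\}$; $C_2=\{x: x(i,\cdot,k)\in\mathcal{E}\ \forall i,k\}$; $C_3=\{x: x(i,j,\cdot)\in\mathcal{E}\ \forall i,j\}$; $C_4=\{x:$ for every $k$ and every $a,b\in\{1,\dots,\sqrt s\}$, the $\sqrt s\times\sqrt s$ block $\big(x(i,j,k)\big)_{i\in\{\sqrt s(a-1)+1,\dots,\sqrt s a\},\, j\in\{\sqrt s(b-1)+1,\dots,\sqrt s b\}}$, viewed as a vector in $\mathbb{R}^s$, lies in $\mathcal{E}\}$; $C_5=\{x: x(i,j,k)=g(i,j,k)\ \forall (i,j,k)\in\Omega\}$ for a given index set $\Omega$ and given values $g$ (encoding the provided clues). For non-empty $C$, $P_C(x)=\{y\in C:\|x-y\|=\operatorname{dist}(x,C)\}$. $C$ is prox-regular at $x\in C$ for $v$ if $P_C(x+v)=\{x\}$. The proximal normal cone is $N^P_C(x)=\operatorname{cone}(P_C^{-1}(x)-x)$; the limiting normal cone $N_C(x)$ is the set of all limits of $v_k\in N^P_C(x_k)$ with $x_k\in C$, $x_k\to x$. $\operatorname{int}$ denotes interior. *)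

From HB Require Import structures.
From mathcomp Require Import all_boot all_order all_algebra.
From mathcomp Require Import all_classical all_reals.
Set Implicit Arguments. Unset Strict Implicit. Unset Printing Implicit Defensive.
Import Order.TTheory GRing.Theory Num.Theory.
Local Open Scope ring_scope.
Local Open Scope classical_set_scope.

(* Index set {1..s}^3, 0-based: (i, j, k) *)
Definition idx (s : nat) := ('I_s * 'I_s * 'I_s)%type.

Definition E (R : realType) (s : nat) := {ffun idx s -> R}.

Definition scaleE (R : realType) (s : nat) (l : R) (x : E R s) : E R s :=
  [ffun p => l * x p].

Definition enorm (R : realType) (s : nat) (x : E R s) : R :=
  Num.sqrt (\sum_(p : idx s) (x p) ^+ 2).

Definition norm5 (R : realType) (s : nat) (z : 'I_5 -> E R s) : R :=
  Num.sqrt (\sum_(i < 5) (enorm (z i)) ^+ 2).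

Definition cvgE (R : realType) (s : nat) (u : nat -> E R s) (l : E R s) :=
  forall e : R, 0 < e -> exists N, forall k, (N <= k)%N -> enorm (u k - l) < e.
Definition cvg5 (R : realType) (s : nat) (u : nat -> 'I_5 -> E R s)
  (l : 'I_5 -> E R s) :=
  forall e : R, 0 < e -> exists N, forall k, (N <= k)%N ->
    norm5 (fun i => u k i - l i) < e.

Definition is_std (R : realType) (n : nat) (v : 'I_n -> R) :=
  exists i0 : 'I_n, forall i, v i = if i == i0 then 1 else 0.

Definition C1 (R : realType) (s : nat) : set (E R s) :=
  [set x | forall j k : 'I_s, is_std (fun i => x (i, j, k))].
Definition C2 (R : realType) (s : nat) : set (E R s) :=
  [set x | forall i k : 'I_s, is_std (fun j => x (i, j, k))].
Definition C3 (R : realType) (s : nat) : set (E R s) :=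
  [set x | forall i j : 'I_s, is_std (fun k => x (i, j, k))].
(* m = sqrt s; block (a,b) = rows i with i %/ m = a, columns j with j %/ m = b;
   the block (an m x m array = a vector of R^s) is a standard basis vector iff
   exactly one position (r,t) carries 1 and all others 0. *)
Definition C4 (R : realType) (s m : nat) : set (E R s) :=
  [set x | forall (k : 'I_s) (a b : 'I_m), exists r t : 'I_m,
     forall i j : 'I_s, (i %/ m)%N = a -> (j %/ m)%N = b ->
       x (i, j, k) = if ((i %% m)%N == r) && ((j %% m)%N == t) then 1 else 0].
Definition C5 (R : realType) (s : nat) (Om : set (idx s)) (g : idx s -> R)
  : set (E R s) := [set x | forall p, Om p -> x p = g p].

Definition sudokuC (R : realType) (s m : nat) (Om : set (idx s)) (g : idx s -> R)
  (i : 'I_5) : set (E R s) :=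
  match val i with
  | 0 => @C1 R s | 1 => @C2 R s | 2 => @C3 R s | 3 => @C4 R s m | _ => C5 Om g
  end.

Definition distE (R : realType) (s : nat) (C : set (E R s)) (x : E R s) : R :=
  inf [set enorm (x - y) | y in C].
Definition projE (R : realType) (s : nat) (C : set (E R s)) (x : E R s)
  : set (E R s) := [set y | C y /\ enorm (x - y) = distE C x].

Definition prox_regular (R : realType) (s : nat) (C : set (E R s)) (x v : E R s) :=
  C x /\ projE C (x + v) = [set x].

Definition prox_normal (R : realType) (s : nat) (C : set (E R s)) (x : E R s)
  : set (E R s) :=
  [set v | exists (l : R) (y : E R s), 0 <= l /\ projE C y x /\ v = scaleE l (y - x)].

Definition lim_normal (R : realType) (s : nat) (C : set (E R s)) (x : E R s)
  : set (E R s) :=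
  [set v | exists (xs vs : nat -> E R s),
     (forall k, C (xs k)) /\ (forall k, prox_normal C (xs k) (vs k)) /\
     cvgE xs x /\ cvgE vs v].

Definition interiorE (R : realType) (s : nat) (A : set (E R s)) : set (E R s) :=
  [set v | exists e : R, 0 < e /\ forall w, enorm (w - v) < e -> A w].

From HB Require Import structures.
From mathcomp Require Import all_boot all_order all_algebra.
From mathcomp Require Import all_classical all_reals.
From mathcomp Require Import ring lra zify.
Set Implicit Arguments. Unset Strict Implicit. Unset Printing Implicit Defensive.
Import Order.TTheory GRing.Theory Num.Theory.
Local Open Scope ring_scope.
Local Open Scope classical_set_scope.

(* 1. Finite identification.  Every element of C1, ..., C4 has entries in
      {0, 1}; a convergent sequence with such entries is eventually equal
      to its limit.  Hence u_{i,k} = x* for i < 4 and k large.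
   2. Entrywise dynamics.  Once u_{i,k} = x* for i < 4, the iteration
      decouples over the entries p.  The projection onto C5 sets the
      clue entries to g and leaves the others untouched.  On a clue entry
      the iterates become constant after two steps.  On a free entry the
      error e_k = x_k(p) - x*(p) obeys 5 e_{k+2} = 2 e_{k+1} - e_k, whose
      characteristic roots have modulus 1/sqrt 5; a positive definite
      quadratic form in (e_{k+1}, e_k) shrinks by 1/5 at every step.
   3. Summing the entrywise bounds gives the rate (sqrt 5 / 5)^k. *)

Local Notation last5 := (@ord_max 4).

Lemma not_head4 (i : 'I_5) : ~~ (val i < 4)%N -> i = last5.
Proof. by case: i => [n hn] /= h; apply: val_inj => /=; lia. Qed.

Lemma eventually_uniform (T : finType) (P : T -> nat -> Prop) :
  (forall t, exists N, forall k, (N <= k)%N -> P t k) ->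
  exists N, forall k t, (N <= k)%N -> P t k.
Proof.
move=> H; have [f Hf] := choice H.
by exists (\max_t f t)%N => k t hk; apply: Hf; apply: leq_trans (leq_bigmax t) hk.
Qed.

Section EuclideanNorm.
Variables (R : realType) (s : nat).

Lemma enorm_ge0 (v : E R s) : 0 <= enorm v.
Proof. exact: sqrtr_ge0. Qed.

Lemma entry_le_enorm (v : E R s) p : `|v p| <= enorm v.
Proof.
have ge0 : 0 <= \sum_q v q ^+ 2 by apply: sumr_ge0 => q _; apply: sqr_ge0.
rewrite /enorm -sqrtr_sqr ler_sqrt // (bigD1 p) //= lerDl.
by apply: sumr_ge0 => q _; apply: sqr_ge0.
Qed.

Lemma enorm_le_norm5 (w : 'I_5 -> E R s) i : enorm (w i) <= norm5 w.
Proof.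
have ge0 : 0 <= \sum_(j < 5) enorm (w j) ^+ 2.
  by apply: sumr_ge0 => j _; apply: sqr_ge0.
rewrite /norm5 -[enorm (w i)]ger0_norm ?enorm_ge0 // -sqrtr_sqr ler_sqrt //.
by rewrite (bigD1 i) //= lerDl; apply: sumr_ge0 => j _; apply: sqr_ge0.
Qed.

Lemma norm5_le_entrywise (w : 'I_5 -> E R s) (b : idx s -> R) :
  (forall i p, w i p ^+ 2 <= b p) -> norm5 w <= Num.sqrt (5%:R * \sum_p b p).
Proof.
move=> hb; rewrite /norm5 ler_sqrt; last first.
  apply: mulr_ge0 => //; apply: sumr_ge0 => p _.
  exact: le_trans (sqr_ge0 _) (hb last5 p).
rewrite (_ : 5%:R * _ = \sum_(i < 5) \sum_p b p); last first.
  by rewrite sumr_const card_ord mulr_natl.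
apply: ler_sum => i _.
rewrite /enorm sqr_sqrtr; last by apply: sumr_ge0 => p _; apply: sqr_ge0.
by apply: ler_sum => p _; apply: hb.
Qed.
End EuclideanNorm.

Lemma sqrt_geometric (R : realType) (c : R) k : 0 <= c ->
  Num.sqrt (c * 5%:R^-1 ^+ k) = Num.sqrt c * (Num.sqrt 5%:R / 5%:R) ^+ k.
Proof.
move=> c0; have eta0 : 0 <= Num.sqrt 5%:R / 5%:R :> R by rewrite divr_ge0 ?sqrtr_ge0.
have eta2 : (Num.sqrt 5%:R / 5%:R) ^+ 2 = 5%:R^-1 :> R.
  by rewrite expr_div_n sqr_sqrtr ?ler0n //; field.
have -> : 5%:R^-1 ^+ k = ((Num.sqrt 5%:R / 5%:R) ^+ k) ^+ 2 :> R.
  by rewrite -exprM mulnC exprM eta2.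
by rewrite sqrtrM // sqrtr_sqr ger0_norm // exprn_ge0.
Qed.

Section ScalarLimits.
Variable R : realType.

Definition cv (a : nat -> R) (l : R) :=
  forall e : R, 0 < e -> exists N, forall k, (N <= k)%N -> `|a k - l| < e.

Lemma cvgE_entry s (v : nat -> E R s) l p : cvgE v l -> cv (fun k => v k p) (l p).
Proof.
move=> H e e0; have [N HN] := H e e0; exists N => k /HN.
by apply: le_lt_trans; have := entry_le_enorm (v k - l) p; rewrite !ffunE.
Qed.

Lemma cvg5_entry s (w : nat -> 'I_5 -> E R s) l i p :
  cvg5 w l -> cv (fun k => w k i p) (l i p).
Proof.
move=> H e e0; have [N HN] := H e e0; exists N => k /HN.
apply: le_lt_trans; apply: le_trans (enorm_le_norm5 (fun i => w k i - l i) i).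
by have := entry_le_enorm (w k i - l i) p; rewrite !ffunE.
Qed.

Lemma cv_uniq (a b : nat -> R) l l' M : cv a l -> cv b l' ->
  (forall k, (M <= k)%N -> a k = b k) -> l = l'.
Proof.
move=> Ha Hb Hab; apply/eqP; apply/negPn/negP => Hne.
have e0 : 0 < `|l - l'| / 2 by rewrite divr_gt0 // normr_gt0 subr_eq0.
have [N1 H1] := Ha _ e0; have [N2 H2] := Hb _ e0.
pose k := (N1 + N2 + M)%N.
have h1 := H1 k (leq_trans (leq_addr N2 N1) (leq_addr _ _)).
have h2 := H2 k (leq_trans (leq_addl N1 N2) (leq_addr _ _)).
rewrite Hab ?leq_addl // in h1.
by have := ler_distD (b k) l l'; rewrite (distrC l (b k)); lra.
Qed.

Lemma limit_of_offset (a b : nat -> R) c l N :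
  (forall k, (N <= k)%N -> a k = c + b k) -> cv b 0 -> cv a l -> l = c.
Proof.
move=> hab hb ha; apply: (cv_uniq ha _ hab) => e e0.
by have [M hM] := hb e e0; exists M => k /hM; rewrite subr0 [c + _]addrC addrK.
Qed.

Lemma cv_const (c : R) : cv (fun _ => c) c.
Proof. by move=> e e0; exists 0%N => k _; rewrite subrr normr0. Qed.

Lemma limit_of_eventually_const (a : nat -> R) c l N :
  (forall k, (N <= k)%N -> a k = c) -> cv a l -> l = c.
Proof. by move=> hc ha; apply: (cv_uniq ha (cv_const c) hc). Qed.

Lemma cv_lincomb (e : nat -> R) (a b : R) :
  cv e 0 -> cv (fun k => a * e k.+1 - b * e k) 0.
Proof.
move=> H eps eps0; pose d := `|a| + `|b| + 1.
have d0 : 0 < d by rewrite ltr_wpDl ?addr_ge0.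
have [N HN] := H (eps / d) (divr_gt0 eps0 d0).
exists N => k Hk; have h1 := HN _ (leqW Hk); have h0 := HN _ Hk.
rewrite subr0 in h1; rewrite subr0 in h0; rewrite subr0.
apply: le_lt_trans (ler_normB _ _) _; rewrite !normrM.
have hA : `|a| * `|e k.+1| <= `|a| * (eps / d) by rewrite ler_wpM2l // ltW.
have hB : `|b| * `|e k| <= `|b| * (eps / d) by rewrite ler_wpM2l // ltW.
have key : (`|a| + `|b|) * (eps / d) < eps.
  by rewrite mulrA ltr_pdivrMr // [X in _ < X]mulrC ltr_pM2r // ltrDl.
by rewrite mulrDl in key; lra.
Qed.
End ScalarLimits.

Lemma binary_cvg_eventually_eq (R : realType) s (v : nat -> E R s) l M :
  (forall k p, (M <= k)%N -> v k p = 0 \/ v k p = 1) -> cvgE v l ->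
  exists N, forall k, (N <= k)%N -> v k = l.
Proof.
move=> bin hv; have h2 : (0 : R) < 2%:R^-1 by rewrite invr_gt0 ltr0n.
have [N0 HN0] := hv _ h2; pose N := maxn M N0.
have close k p : (N <= k)%N -> `|v k p - l p| < 2%:R^-1.
  move=> hk; apply: le_lt_trans (HN0 k _); last by apply: leq_trans hk; lia.
  by have := entry_le_enorm (v k - l) p; rewrite !ffunE.
have const p k : (N <= k)%N -> v k p = v N p.
  move=> hk; have := close k p hk; have := close N p (leqnn N).
  rewrite !ltr_norml => /andP[? ?] /andP[? ?].
  by case: (bin k p (leq_trans (leq_maxl _ _) hk)) => ?;
     case: (bin N p (leq_maxl _ _)) => ?; lra.
exists N => k hk; apply/ffunP => p.
by rewrite const // (limit_of_eventually_const (const p) (cvgE_entry p hv)).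
Qed.

Lemma sudoku_binary (R : realType) s m Om (g : idx s -> R) (i : 'I_5) (v : E R s) :
  s = (m * m)%N -> (val i < 4)%N -> sudokuC m Om g i v ->
  forall p, v p = 0 \/ v p = 1.
Proof.
have bit (b : bool) : ((if b then 1 else 0) = 0 :> R) \/ (if b then 1 else 0) = 1.
  by case: b; [right | left].
move=> hs; case: i => [n hn] /= hi; rewrite /sudokuC /= => H [[a b] c].
case: n hn hi H => [|[|[|[|n]]]] // _ _ H.
- by have [i0 ->] := H b c.
- by have [i0 ->] := H a c.
- by have [i0 ->] := H a b.
- have m0 : (0 < m)%N by move: (ltn_ord a); move: (val a) => a'; rewrite hs; case: (m).
  have ha : (a %/ m < m)%N by rewrite ltn_divLR // -hs.
  have hb : (b %/ m < m)%N by rewrite ltn_divLR // -hs.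
  by have [r [t ->]] := H c (Ordinal ha) (Ordinal hb).
Qed.

Lemma projC5_free_entry (R : realType) s Om (g : idx s -> R) (y w : E R s) :
  projE (C5 Om g) y w -> forall p, ~ Om p -> w p = y p.
Proof.
move=> [Cw Hw] p Hp; pose w' : E R s := [ffun q => if q == p then y p else w q].
have Cw' : C5 Om g w'.
  by move=> q Hq; rewrite ffunE; case: eqP => [E|_]; [subst q | exact: Cw].
have : enorm (y - w) <= enorm (y - w').
  rewrite Hw; apply: inf_lbound; last by exists w'.
  by exists 0 => r [q _ <-]; apply: enorm_ge0.
rewrite /enorm ler_sqrt; last by apply: sumr_ge0 => q _; apply: sqr_ge0.
rewrite (bigD1 p) //= [X in _ <= X](bigD1 p) //= !ffunE eqxx subrr expr0n /= add0r.
under [X in _ <= X]eq_bigr => q /negPf hq do rewrite !ffunE hq.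
rewrite [X in _ <= X](eq_bigr (fun q => (y - w) q ^+ 2)); last first.
  by move=> q _; rewrite !ffunE.
rewrite gerDr => h.
have : (y p - w p) ^+ 2 = 0 by apply/eqP; rewrite eq_le h sqr_ge0.
by move/eqP; rewrite sqrf_eq0 subr_eq0 => /eqP.
Qed.

Lemma last_block_entry (R : realType) s m Om (g : idx s -> R)
    (xk : E R s) (zk uk zk' : E R s) p :
  projE (sudokuC m Om g last5) (scaleE 2%:R xk - zk) uk -> zk' = zk + uk - xk ->
  (~ Om p -> zk' p = xk p) /\ (Om p -> zk' p = zk p + g p - xk p).
Proof.
rewrite /sudokuC /= => hu ->; split => hp; rewrite !ffunE.
  by rewrite (projC5_free_entry hu hp) !ffunE; lra.
by rewrite (hu.1 p hp).
Qed.

Section DampedRecurrence.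
Variable R : realType.

Lemma geometric_from (q : nat -> R) (c : R) N : c != 0 ->
  (forall k, (N <= k)%N -> q k.+1 = q k / c) ->
  forall k, (N <= k)%N -> q k = q N * c ^+ N * c^-1 ^+ k.
Proof.
move=> c0 hq; elim=> [|k IH].
  by rewrite leqn0 => /eqP ->; rewrite !expr0 !mulr1.
rewrite leq_eqVlt => /orP[/eqP <- | hk].
  by rewrite -mulrA -exprMn mulfV // expr1n mulr1.
by rewrite hq // IH // exprS; field.
Qed.

(* Solutions of 5 e_{k+2} = 2 e_{k+1} - e_k decay like 5^-k in square:
   Q_k = e_{k+1}^2 - (2/5) e_{k+1} e_k + e_k^2 / 5 satisfies Q_{k+1} = Q_k / 5
   and dominates e_{k+1}^2 + e_k^2 up to the factor 7. *)
Lemma damped_recurrence_decay (e : nat -> R) N :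
  (forall k, (N <= k)%N -> 5%:R * e k.+2 = 2%:R * e k.+1 - e k) ->
  exists D, 0 <= D /\
    forall k, (N <= k)%N -> e k.+1 ^+ 2 + e k ^+ 2 <= D * 5%:R^-1 ^+ k.
Proof.
move=> rec.
pose Q k := e k.+1 ^+ 2 - 2%:R / 5%:R * e k.+1 * e k + 5%:R^-1 * e k ^+ 2.
have Q_dom k : 0 <= Q k /\ e k.+1 ^+ 2 + e k ^+ 2 <= 7%:R * Q k.
  have := sqr_ge0 (e k.+1 - e k / 5%:R); have := sqr_ge0 (e k.+1 - 7%:R / 30%:R * e k).
  by have := sqr_ge0 (e k); rewrite /Q; split; nra.
have Q_step k : (N <= k)%N -> Q k.+1 = Q k / 5%:R.
  move=> hk; have he : e k.+2 = (2%:R * e k.+1 - e k) / 5%:R.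
    by rewrite -(rec k hk); field.
  by rewrite /Q he; field.
have five0 : 5%:R != 0 :> R by rewrite pnatr_eq0.
have Q_geo := geometric_from five0 Q_step.
exists (7%:R * (Q N * 5%:R ^+ N)); split.
  by apply: mulr_ge0 => //; apply: mulr_ge0; [exact: (Q_dom N).1 | exact: exprn_ge0].
by move=> k hk; rewrite -mulrA -Q_geo //; exact: (Q_dom k).2.
Qed.
(* The offset of the first four blocks on a free entry is controlled by the
   last two errors. *)
Lemma offset_sqr_le (a b : R) :
  (5%:R / 4%:R * a - 4%:R^-1 * b) ^+ 2 <= 2%:R * (a ^+ 2 + b ^+ 2).
Proof. by have := sqr_ge0 (a + 5%:R / 7%:R * b); have := sqr_ge0 b; nra. Qed.
End DampedRecurrence.

(* The iteration at a single entry p, after the finite identification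
   u_{i,k} = x* (i < 4, k >= N): xe, ze are the entries of x_k, z_{i,k}
   and xl, zl those of the limits. *)
Section EntryDynamics.
Variables (R : realType) (xe : nat -> R) (ze : nat -> 'I_5 -> R).
Variables (xl : R) (zl : 'I_5 -> R) (N : nat).
Hypothesis x_avg : forall k, xe k.+1 = 5%:R^-1 * \sum_(i < 5) ze k i.
Hypothesis z_identified : forall k (i : 'I_5), (N <= k.+1)%N -> (val i < 4)%N ->
  ze k.+1 i = ze k i + xl - xe k.+1.
Hypothesis x_cvg : cv xe xl.
Hypothesis z_cvg : forall i, cv (fun k => ze k i) (zl i).

Let head4 k := \sum_(i < 4) ze k (widen_ord (leqnSn 4) i).

Lemma sum_head4 k : \sum_(i < 5) ze k i = head4 k + ze k last5.
Proof. by rewrite big_ord_recr. Qed.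

Lemma head4_step k : (N <= k.+1)%N -> head4 k.+1 = head4 k + 4%:R * (xl - xe k.+1).
Proof.
move=> hk; rewrite /head4 (eq_bigr (fun i => ze k (widen_ord (leqnSn 4) i) + (xl - xe k.+1))).
  by rewrite big_split /= sumr_const card_ord mulr_natl.
by move=> i _; rewrite z_identified ?addrA //= ltn_ord.
Qed.

Section FreeEntry.
Hypothesis z4_free : forall k, ze k.+1 last5 = xe k.+1.
Hypothesis N_pos : (0 < N)%N.

Let err k := xe k - xl.

Lemma free_entry_recurrence k : (N <= k)%N ->
  5%:R * err k.+2 = 2%:R * err k.+1 - err k.
Proof.
move=> hk; have h1 := x_avg k; have h2 := x_avg k.+1.
have z4k : ze k last5 = xe k by case: k hk {h1 h2} => [|k] hk; [lia | exact: z4_free].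
rewrite sum_head4 in h1; rewrite sum_head4 head4_step ?z4_free in h2; last by lia.
by rewrite /err; lra.
Qed.

Lemma free_entry_offset (i : 'I_5) : (val i < 4)%N -> forall k, (N <= k)%N ->
  ze k i = zl i + (5%:R / 4%:R * err k.+1 - 4%:R^-1 * err k).
Proof.
move=> hi; pose c := ze N i - (5%:R / 4%:R * err N.+1 - 4%:R^-1 * err N).
have inv k : (N <= k)%N -> ze k i = c + (5%:R / 4%:R * err k.+1 - 4%:R^-1 * err k).
  elim: k => [|k IH]; first by move: N_pos; case: N.
  rewrite leq_eqVlt => /orP[/eqP <- | hk]; first by rewrite /c; ring.
  have := @z_identified k i (ltnW hk) hi; have := free_entry_recurrence hk.
  by rewrite IH // /err; lra.
have err_cvg : cv err 0.
  by move=> e e0; have [M hM] := x_cvg e0; exists M => k /hM; rewrite subr0.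
by rewrite (limit_of_offset inv (cv_lincomb _ _ err_cvg) (z_cvg i)); apply: inv.
Qed.

Lemma free_entry_rate : exists D, 0 <= D /\ forall k, (N <= k)%N ->
  forall i, (ze k i - zl i) ^+ 2 <= D * 5%:R^-1 ^+ k.
Proof.
have [D [D0 HD]] := damped_recurrence_decay free_entry_recurrence.
have zl4 : zl last5 = xl by apply: (cv_uniq (z_cvg last5) x_cvg (M := 1%N)); case.
exists (2%:R * D); split=> [|k hk i]; first exact: mulr_ge0.
have hD := HD k hk; rewrite -mulrA.
case: (boolP (val i < 4)%N) => hi.
  rewrite free_entry_offset // addrAC subrr add0r.
  by apply: le_trans (offset_sqr_le _ _) _; rewrite ler_pM2l.
rewrite (not_head4 hi) zl4.
have -> : ze k last5 = xe k by case: k hk {hD} => [|k] hk; [lia | exact: z4_free].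
have bound0 : 0 <= D * 5%:R^-1 ^+ k by rewrite mulr_ge0 // exprn_ge0 // invr_ge0.
apply: le_trans (_ : _ <= D * 5%:R^-1 ^+ k) _; last by lra.
by apply: le_trans hD; rewrite lerDr sqr_ge0.
Qed.
End FreeEntry.

Section ClueEntry.
Variable gp : R.
Hypothesis z4_clue : forall k, ze k.+1 last5 = ze k last5 + gp - xe k.+1.

Lemma clue_entry_x_const j : (N.+2 <= j)%N -> xe j = (4%:R * xl + gp) / 5%:R.
Proof.
case: j => [|[|j]] // hj; have h1 := x_avg j; have h2 := x_avg j.+1.
rewrite sum_head4 in h1; rewrite sum_head4 head4_step ?z4_clue in h2; last by lia.
by lra.
Qed.

Lemma clue_value_eq_limit : gp = xl.
Proof. by have := limit_of_eventually_const clue_entry_x_const x_cvg; lra. Qed.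

Lemma clue_entry_exact k : (N.+2 <= k)%N -> forall i, ze k i - zl i = 0.
Proof.
have x_lim j : (N.+2 <= j)%N -> xe j = xl.
  by move=> hj; rewrite clue_entry_x_const // clue_value_eq_limit; field.
have const i j : (N.+2 <= j)%N -> ze j i = ze N.+2 i.
  elim: j => [|j IH] //; rewrite leq_eqVlt => /orP[/eqP <- // | hj].
  rewrite -(IH hj); case: (boolP (val i < 4)%N) => hi.
    by rewrite z_identified ?x_lim //; first ring; lia.
  by rewrite (not_head4 hi) z4_clue x_lim ?clue_value_eq_limit; [ring | lia].
move=> hk i; rewrite const // (limit_of_eventually_const (const i) (z_cvg i)).
by rewrite subrr.
Qed.
End ClueEntry.

Lemma entry_rate : (0 < N)%N ->
  (forall k, ze k.+1 last5 = xe k.+1) \/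
  (exists gp, forall k, ze k.+1 last5 = ze k last5 + gp - xe k.+1) ->
  exists D, 0 <= D /\ forall k, (N.+2 <= k)%N ->
    forall i, (ze k i - zl i) ^+ 2 <= D * 5%:R^-1 ^+ k.
Proof.
move=> N0 [z4 | [gp z4]].
  have [D [D0 HD]] := free_entry_rate z4 N0.
  by exists D; split=> // k hk; apply: HD; lia.
by exists 0; split=> // k hk i; rewrite (clue_entry_exact z4 hk) expr0n mul0r.
Qed.
End EntryDynamics.

Theorem proposition4p4 (R : realType) (s m : nat) (hs : s = (m * m)%N)
  (h4 : (4 <= s)%N) (Om : set (idx s)) (g : idx s -> R)
  (x : nat -> E R s) (u z : nat -> 'I_5 -> E R s) (zs : 'I_5 -> E R s) :
  (exists y, forall i, sudokuC m Om g i y) ->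
  (forall k, x k.+1 = scaleE 5%:R^-1 (\sum_(i < 5) z k i)) ->
  (forall k i, projE (sudokuC m Om g i) (scaleE 2%:R (x k.+1) - z k i) (u k.+1 i)) ->
  (forall k i, z k.+1 i = z k i + u k.+1 i - x k.+1) ->
  let xs := scaleE 5%:R^-1 (\sum_(i < 5) zs i) in
  cvg5 z zs -> cvgE x xs -> (forall i, cvgE (fun k => u k i) xs) ->
  (forall i : 'I_5, (val i < 4)%N ->
     prox_regular (sudokuC m Om g i) xs (xs - zs i) /\
     interiorE (lim_normal (sudokuC m Om g i) xs) (xs - zs i)) ->
  exists (K : nat) (c : R), forall k, (K <= k)%N ->
    (forall i : 'I_5, (val i < 4)%N -> u k i = xs) /\
    norm5 (fun i => z k i - zs i) <= c * (Num.sqrt 5%:R / 5%:R) ^+ k.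
Proof.
move=> _ Hx Hu Hz xs Hcz Hcx Hcu _.
have [N0 ident] : exists N, forall k (i : 'I_5), (N <= k)%N -> (val i < 4)%N -> u k i = xs.
  apply: eventually_uniform => i; case: (boolP (val i < 4)%N) => hi; last by exists 0%N.
  have binary k p : (1 <= k)%N -> u k i p = 0 \/ u k i p = 1.
    by case: k => // k _; apply: sudoku_binary hs hi (Hu k i).1 p.
  have [N HN] := binary_cvg_eventually_eq binary (Hcu i).
  by exists N => k hk _; apply: HN.
have rate (p : idx s) : exists D, 0 <= D /\ forall k, (N0.+3 <= k)%N ->
    forall i, (z k i p - zs i p) ^+ 2 <= D * 5%:R^-1 ^+ k.
  have x_avg k : x k.+1 p = 5%:R^-1 * \sum_(i < 5) z k i p.
    by rewrite Hx ffunE sum_ffunE.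
  have z_identified k (i : 'I_5) : (N0.+1 <= k.+1)%N -> (val i < 4)%N ->
      z k.+1 i p = z k i p + xs p - x k.+1 p.
    by move=> hk hi; rewrite Hz (ident _ _ (ltnW hk) hi) !ffunE.
  apply: (entry_rate x_avg z_identified (cvgE_entry p Hcx)) => //.
    by move=> i; apply: cvg5_entry.
  have blk k := last_block_entry p (Hu k last5) (Hz k last5).
  case: (pselect (Om p)) => hp; [right; exists (g p) | left] => k.
    exact: (blk k).2 hp.
  exact: (blk k).1 hp.
have [D HD] := choice rate.
have D0 : 0 <= \sum_p D p by apply: sumr_ge0 => p _; exact: (HD p).1.
exists N0.+3, (Num.sqrt (5%:R * \sum_p D p)) => k hk; split.
  by move=> i; apply: ident; lia.
rewrite -sqrt_geometric ?mulr_ge0 // -mulrA mulr_suml.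
by apply: norm5_le_entrywise => i p; rewrite !ffunE; apply: (HD p).2.
Qed.
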